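(* Let $\mathbb{F}\subseteq\mathbb{C}$ be a subfield closed under complex conjugation, $m\ge2$, $N\ge1$, and let $\zeta_1,\dots,\zeta_{m-1}\in\mathcal{P}_N^-[\mathbb{F}]$. If $\mathbf{u}(z)=(u_1,\dots,u_{m-1},\widetilde{u_m})^T$ and $\mathbf{v}(z)=(v_1,\dots,v_{m-1},\widetilde{v_m})^T$, with $u_i,v_i\in\mathcal{P}_N^+[\mathbb{F}]$, are two solutions of the system $(\mathcal{S})$ and $\mathbf{u}(1)=\mathbf{v}(1)$, then $\mathbf{u}(z)=\mathbf{v}(z)$ for every $z\in\mathbb{C}\setminus\{0\}$. In particular, if a solution $\mathbf{u}$ satisfies $\mathbf{u}(1)=0\in\mathbb{F}^m$, then $\mathbf{u}(z)=0$ for all $z\in\mathbb{C}\setminus\{0\}$.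
   Context: For a Laurent polynomial $p(z)=\sum_k c_kz^k$ write $\widetilde{p}(z)=\sum_k\overline{c_k}z^{-k}$. $\mathcal{P}_N^+[\mathbb{F}]=\{\sum_{k=0}^Nc_kz^k: c_k\in\mathbb{F}\}$, $\mathcal{P}_N^-[\mathbb{F}]=\{\sum_{k=1}^Nc_kz^{-k}: c_k\in\mathbb{F}\}$. Let $\mathcal{P}^+$ denote the set of polynomials in $z$ (Laurent polynomials with no negative powers). The system $(\mathcal{S})$ in unknowns $x_1,\dots,x_m$ is $$\zeta_i(z)x_m(z)-\widetilde{x_i}(z)\in\mathcal{P}^+\ (i=1,\dots,m-1),\qquad \sum_{i=1}^{m-1}\zeta_i(z)x_i(z)+\widetilde{x_m}(z)\in\mathcal{P}^+.$$ A vector $(u_1,\dots,u_{m-1},\widetilde{u_m})^T$ with $u_i\in\mathcal{P}_N^+[\mathbb{F}]$ is called a solution of $(\mathcal{S})$ if all these conditions hold with $x_i=u_i$, $i=1,\dots,m$. *)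

From HB Require Import structures.
From mathcomp Require Import all_boot all_order all_algebra.
From mathcomp Require Import complex.
From mathcomp Require Import reals.
Set Implicit Arguments. Unset Strict Implicit. Unset Printing Implicit Defensive.
Import Order.TTheory GRing.Theory Num.Theory.
Local Open Scope ring_scope.

Section Laurent.
Variable C : fieldType.
Variable conj : C -> C.

(* A Laurent polynomial  z^{-lsh} * lp(z). *)
Record laurent := Laurent { lp : {poly C}; lsh : nat }.

Definition lcoef (L : laurent) (k : int) : C :=
  match (k + (lsh L)%:Z)%R with Posz n => (lp L)`_n | Negz _ => 0 end.

Definition lpoly (p : {poly C}) : laurent := Laurent p 0.
Definition ladd (L M : laurent) : laurent :=
  Laurent (lp L * 'X^(lsh M) + lp M * 'X^(lsh L)) (lsh L + lsh M).
Definition lopp (L : laurent) : laurent := Laurent (- lp L) (lsh L).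
Definition lsub (L M : laurent) : laurent := ladd L (lopp M).
Definition lmul (L M : laurent) : laurent := Laurent (lp L * lp M) (lsh L + lsh M).
Definition lzero : laurent := lpoly 0.

(* tilde: sum_k c_k z^k  |->  sum_k conj(c_k) z^{-k} *)
Definition ltilde (L : laurent) : laurent :=
  let p := lp L in let d := (size p).-1 in
  Laurent ((\poly_(j < size p) conj (p`_(d - j))) * 'X^(lsh L)) d.

Definition leval (L : laurent) (z : C) : C := (lp L).[z] / z ^+ lsh L.

Definition in_Pplus (L : laurent) : Prop := forall k : int, k < 0 -> lcoef L k = 0.

Definition in_PNplus (F : {pred C}) (N : nat) (p : {poly C}) : Prop :=
  (size p <= N.+1)%N /\ forall j, p`_j \in F.

Definition in_PNminus (F : {pred C}) (N : nat) (L : laurent) : Prop :=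
  (forall k, lcoef L k \in F) /\
  (forall k : int, (0 <= k \/ k < - (N%:Z)) -> lcoef L k = 0).

(* Solution of (S): zeta_1..zeta_{m-1}, u_1..u_m (1-based indices). *)
Definition is_solution (F : {pred C}) (N m : nat) (zeta : nat -> laurent)
    (u : nat -> {poly C}) : Prop :=
  (forall i, (1 <= i <= m)%N -> in_PNplus F N (u i)) /\
  (forall i, (1 <= i < m)%N ->
     in_Pplus (lsub (lmul (zeta i) (lpoly (u m))) (ltilde (lpoly (u i))))) /\
  in_Pplus (ladd (foldr ladd lzero
                    [seq lmul (zeta i) (lpoly (u i)) | i <- iota 1 m.-1])
                 (ltilde (lpoly (u m)))).

Definition solvec (m : nat) (u : nat -> {poly C}) (z : C) : 'cV[C]_m :=
  \col_(i < m) (if (i.+1 < m)%N then (u i.+1).[z]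
                else leval (ltilde (lpoly (u m))) z).
End Laurent.

From HB Require Import structures.
From mathcomp Require Import all_boot all_order all_algebra.
From mathcomp Require Import complex.
From mathcomp Require Import reals.
From mathcomp Require Import zify ring.
Import Order.TTheory GRing.Theory Num.Theory.
Set Implicit Arguments. Unset Strict Implicit. Unset Printing Implicit Defensive.
Local Open Scope ring_scope.

(* The system (S) is linear, so the difference w of two solutions is a
   solution with w(1) = 0, and it suffices to show that such a w vanishes.
   Multiplying the i-th equation by w_i and the last one by w_m and adding,
   the zeta-terms cancel: T := \sum_i w_i \widetilde{w_i} lies in P^+.
   Thus z^N T(z) is a polynomial of degree at most 2N, divisible by z^N, with
   coefficients conjugate-symmetric about N; hence it equals c z^N with
   c = T(1) = \sum_i |w_i(1)|^2 = 0.  But c is also the sum of the squared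
   moduli of all the coefficients of the w_i, so every w_i is zero. *)

Section ConjugateReversal.
Variables (C : fieldType) (conj : {rmorphism C -> C}).

Lemma leq_bigsum_mem (I : eqType) (r : seq I) (f : I -> nat) i :
  i \in r -> (f i <= \sum_(j <- r) f j)%N.
Proof. by move=> ri; rewrite (big_rem _ ri) leq_addr. Qed.

Lemma in_Pplus_dvdXn (L : laurent C) : in_Pplus L -> 'X^(lsh L) %| lp L.
Proof.
move=> L_Pplus; rewrite -(poly_take_drop (lsh L) (lp L)).
suff -> : take_poly (lsh L) (lp L) = 0 by rewrite add0r dvdp_mull.
apply/polyP => n; rewrite coef_take_poly coef0; case: ifP => // n_lt.
have := L_Pplus (n%:Z - (lsh L)%:Z); rewrite /lcoef subrK; apply.
by rewrite subr_lt0 ltz_nat.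
Qed.

Lemma in_Pplus_ladd_dvdXn (A T : laurent C) N : (lsh T <= N)%N ->
  in_Pplus (ladd A T) ->
  'X^(lsh A + N) %| lp A * 'X^N + lp T * 'X^(N - lsh T) * 'X^(lsh A).
Proof.
move=> sT_le /in_Pplus_dvdXn /(dvdp_mul (dvdpp 'X^(N - lsh T))) /=.
rewrite -exprD addnCA subnK // mulrDr mulrCA -exprD subnK //.
by rewrite mulrCA mulrA.
Qed.

Lemma lsh_foldr_ladd (I : eqType) (f : I -> laurent C) (r : seq I) :
  lsh (foldr (@ladd C) (lzero C) (map f r)) = (\sum_(i <- r) lsh (f i))%N.
Proof. by elim: r => [|i r IHr]; rewrite ?big_nil ?big_cons //= IHr. Qed.

Lemma lp_foldr_ladd (I : eqType) (f : I -> laurent C) (r : seq I) :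
  lp (foldr (@ladd C) (lzero C) (map f r)) =
  \sum_(i <- r) lp (f i) * 'X^((\sum_(j <- r) lsh (f j))%N - lsh (f i)).
Proof.
elim: r => [|i r IHr] /=; first by rewrite big_nil.
rewrite lsh_foldr_ladd IHr !big_cons addKn mulr_suml; congr (_ + _).
apply: eq_big_seq => j rj; rewrite -mulrA -exprD; congr (_ * 'X^_).
have := leq_bigsum_mem (fun k => lsh (f k)) rj; lia.
Qed.

(* [crev N p] is z^N \widetilde{p}(z), a polynomial when deg p <= N. *)
Definition crev (N : nat) (p : {poly C}) : {poly C} :=
  \poly_(j < N.+1) conj p`_(N - j).

Lemma crevB N (p q : {poly C}) : crev N (p - q) = crev N p - crev N q.
Proof.
apply/polyP => j; rewrite coefB !coef_poly.
by case: ifP; rewrite ?subr0 ?coefB ?rmorphB.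
Qed.

Lemma crevE N (p : {poly C}) :
  crev N p = \sum_(b < N.+1) conj p`_b *: 'X^(N - b).
Proof.
rewrite /crev poly_def (reindex_inj rev_ord_inj); apply: eq_bigr => b _ /=.
by rewrite subSS subKn // -ltnS.
Qed.

Lemma lsh_ltilde_le N (p : {poly C}) :
  (size p <= N.+1)%N -> (lsh (ltilde conj (lpoly p)) <= N)%N.
Proof. by rewrite /= -subn1; lia. Qed.

Lemma ltilde_lpolyE N (p : {poly C}) : (size p <= N.+1)%N ->
  lp (ltilde conj (lpoly p)) * 'X^(N - (size p).-1) = crev N p.
Proof.
move=> p_small; apply/polyP => n.
rewrite coefMXn coef_poly /ltilde /= expr0 mulr1 coef_poly.
have coef_hi k : (size p <= k)%N -> conj p`_k = 0.
  by move=> ?; rewrite nth_default ?rmorph0.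
(* [set] unifies the differently elaborated copies of [size p] for [lia]. *)
rewrite -subn1; have [n_lt|n_ge] := ltnP n (N - (size p - 1)).
  by rewrite ifT ?coef_hi //; lia.
have [n_le|n_gt] := ltnP n N.+1.
  case: ifP => p_lt; [do 2 f_equal | rewrite coef_hi //];
    by set sp := size p in p_lt p_small n_ge *; lia.
case: ifP => p_lt //; rewrite coef_hi //.
by set sp := size p in p_lt p_small n_ge n_gt *; lia.
Qed.

Lemma leval_ltilde1 (p : {poly C}) :
  leval (ltilde conj (lpoly p)) 1 = conj p.[1].
Proof.
rewrite /leval expr1n divr1 /= expr0 mulr1 horner_poly horner_coef rmorph_sum.
rewrite (reindex_inj rev_ord_inj); apply: eq_bigr => j _ /=.
by rewrite !expr1n !mulr1; do 2 f_equal; have := ltn_ord j; lia.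
Qed.

Lemma coef_mul_crev N (p : {poly C}) n : (size p <= N.+1)%N ->
  (p * crev N p)`_n = \sum_(a < N.+1) \sum_(b < N.+1)
    ((a + (N - b))%N == n)%:R * (p`_a * conj p`_b).
Proof.
move=> p_small; rewrite -{1}(take_poly_id p_small) /take_poly poly_def crevE.
rewrite mulr_suml coef_sum; apply: eq_bigr => a _.
rewrite mulr_sumr coef_sum; apply: eq_bigr => b _.
by rewrite -scalerAl -scalerAr scalerA coefZ -exprD coefXn mulrC eq_sym.
Qed.

Lemma coef_mul_crev_mid N (p : {poly C}) :
  (p * crev N p)`_N = \sum_(a < N.+1) p`_a * conj p`_a.
Proof.
rewrite coefM; apply: eq_bigr => a _.
by rewrite coef_poly ltnS leq_subr subKn // -ltnS.
Qed.

Lemma size_mul_crev N (p : {poly C}) :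
  (size p <= N.+1)%N -> (size (p * crev N p)%R <= N.*2.+1)%N.
Proof.
move=> p_small; apply: leq_trans (size_polyMleq _ _) _.
have crev_small : (size (crev N p) <= N.+1)%N by exact: size_poly.
by rewrite -subn1; set sp := size p in p_small *; lia.
Qed.

Lemma coef_mul_crev_sym N (p : {poly C}) n :
  involutive conj -> (size p <= N.+1)%N -> (n <= N.*2)%N ->
  (p * crev N p)`_(N.*2 - n) = conj (p * crev N p)`_n.
Proof.
move=> conjK p_small n_le; rewrite !coef_mul_crev // exchange_big rmorph_sum.
apply: eq_bigr => b _; rewrite rmorph_sum; apply: eq_bigr => a _.
rewrite !rmorphM rmorph_nat conjK [_ * p`_a]mulrC; congr (_%:R * _).
by apply/eqP/eqP; have := ltn_ord a; have := ltn_ord b; lia.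
Qed.

Lemma self_reciprocal_dvdXnE N (T : {poly C}) :
  'X^N %| T -> (size T <= N.*2.+1)%N ->
  (forall n, (n <= N.*2)%N -> T`_(N.*2 - n) = conj T`_n) ->
  T = T`_N *: 'X^N.
Proof.
move=> XN_dvd T_small T_sym.
have low n : (n < N)%N -> T`_n = 0.
  by move=> n_lt; rewrite -(divpK XN_dvd) coefMXn n_lt.
apply/polyP => n; rewrite coefZ coefXn.
have [/low//|n_gt|->] := ltngtP n N; rewrite ?mulr1 ?mulr0 //.
have [n_le|n_big] := leqP n N.*2.
  by rewrite -(subKn n_le) T_sym ?leq_subr // low ?rmorph0 //; lia.
by rewrite nth_default // (leq_trans T_small n_big).
Qed.

Definition shift_sum (m : nat) (zeta : nat -> laurent C) : nat :=
  (\sum_(i <- iota 1 m.-1) lsh (zeta i))%N.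

Definition numer_sum m (zeta : nat -> laurent C) (w : nat -> {poly C}) :=
  \sum_(i <- iota 1 m.-1)
    lp (zeta i) * w i * 'X^(shift_sum m zeta - lsh (zeta i)).

(* (S) multiplied through by its denominators, with z^N \widetilde{w_i}
   written as [crev N (w i)]: a system of divisibilities, linear in w. *)
Definition cleared_system N m (zeta : nat -> laurent C) (w : nat -> {poly C}) :=
  [/\ forall i, (1 <= i <= m)%N -> (size (w i) <= N.+1)%N,
      forall i, (1 <= i < m)%N -> 'X^(lsh (zeta i) + N) %|
        lp (zeta i) * w m * 'X^N - crev N (w i) * 'X^(lsh (zeta i))
    & 'X^(shift_sum m zeta + N) %|
        numer_sum m zeta w * 'X^N + crev N (w m) * 'X^(shift_sum m zeta)].

Lemma is_solution_cleared F N m zeta u : (0 < m)%N ->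
  is_solution conj F N m zeta u -> cleared_system N m zeta u.
Proof.
move=> m_gt0 [u_small [u_Pplus1 u_Pplus2]].
have size_u i : (1 <= i <= m)%N -> (size (u i) <= N.+1)%N by case/u_small.
have size_um : (size (u m) <= N.+1)%N by apply: size_u; rewrite m_gt0 leqnn.
split=> [//|i i_range|].
  have size_ui : (size (u i) <= N.+1)%N by rewrite size_u //; lia.
  have := in_Pplus_ladd_dvdXn (T := lopp (ltilde conj (lpoly (u i))))
    (lsh_ltilde_le size_ui) (u_Pplus1 i i_range).
  by rewrite /= addn0 mulNr ltilde_lpolyE // mulNr.
pose sum_zeta_u := foldr (@ladd C) (lzero C)
  [seq lmul (zeta i) (lpoly (u i)) | i <- iota 1 m.-1].
have shiftE : lsh sum_zeta_u = shift_sum m zeta.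
  by rewrite lsh_foldr_ladd; apply: eq_bigr => i _; rewrite /= addn0.
have numerE : lp sum_zeta_u = numer_sum m zeta u.
  rewrite lp_foldr_ladd -lsh_foldr_ladd shiftE.
  by apply: eq_bigr => i _; rewrite /= addn0.
have := in_Pplus_ladd_dvdXn (lsh_ltilde_le size_um) u_Pplus2.
by rewrite shiftE numerE ltilde_lpolyE.
Qed.

Lemma cleared_systemB N m zeta (u v : nat -> {poly C}) :
  cleared_system N m zeta u -> cleared_system N m zeta v ->
  cleared_system N m zeta (fun i => u i - v i).
Proof.
move=> [u_small u_dvd1 u_dvd2] [v_small v_dvd1 v_dvd2].
have dvdp_eq (d p q : {poly C}) : p = q -> d %| p -> d %| q by move->.
split=> [i i_range|i i_range|].
- by rewrite (leq_trans (size_polyD _ _)) // size_polyN geq_max u_small ?v_small.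
- apply: dvdp_eq (dvdp_sub (u_dvd1 i i_range) (v_dvd1 i i_range)).
  by rewrite crevB; ring.
apply: dvdp_eq (dvdp_sub u_dvd2 v_dvd2).
have -> : numer_sum m zeta (fun i => u i - v i) =
    numer_sum m zeta u - numer_sum m zeta v.
  by rewrite /numer_sum -sumrB; apply: eq_bigr => i _; ring.
by rewrite crevB; ring.
Qed.

Lemma cleared_system_dvdXn N m zeta (w : nat -> {poly C}) : (0 < m)%N ->
  cleared_system N m zeta w ->
  'X^N %| \sum_(i <- iota 1 m) w i * crev N (w i).
Proof.
move=> m_gt0 [_ dvd_eqn dvd_sum].
set S := shift_sum m zeta; set r := iota 1 m.-1.
have iotaE : iota 1 m = r ++ [:: m].
  by rewrite /r -{1}(prednK m_gt0) -[m.-1.+1]addn1 iotaD add1n prednK.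
have shift_le i : i \in r -> (lsh (zeta i) <= S)%N by exact: leq_bigsum_mem.
pose A i := lp (zeta i) * w m * 'X^N - crev N (w i) * 'X^(lsh (zeta i)).
have sumA : \sum_(i <- r) A i * (w i * 'X^(S - lsh (zeta i))) =
    w m * numer_sum m zeta w * 'X^N -
    (\sum_(i <- r) w i * crev N (w i)) * 'X^S.
  rewrite /numer_sum -/S -/r mulr_sumr !mulr_suml -sumrB.
  apply: eq_big_seq => i ri.
  by rewrite /A -{3}(subnKC (shift_le i ri)) exprD; ring.
rewrite -(dvdp_mul2r _ _ (monic_neq0 (monicXn _ S))) -exprD.
have -> : (\sum_(i <- iota 1 m) w i * crev N (w i)) * 'X^S =
    w m * (numer_sum m zeta w * 'X^N + crev N (w m) * 'X^S) -
    \sum_(i <- r) A i * (w i * 'X^(S - lsh (zeta i))).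
  by rewrite sumA iotaE big_cat big_seq1 /=; ring.
apply: dvdp_sub; first by rewrite addnC dvdp_mull.
rewrite big_seq; apply: (big_ind (fun p => 'X^(N + S) %| p)) => [|p q|i ri].
- exact: dvdp0.
- exact: dvdp_add.
- have i_range : (1 <= i < m)%N by move: ri; rewrite mem_iota; lia.
  have -> : (N + S = lsh (zeta i) + N + (S - lsh (zeta i)))%N.
    by have := shift_le i ri; lia.
  by rewrite exprD dvdp_mul ?dvdp_mull ?dvd_eqn.
Qed.

Lemma horner1_eq_of_solvec1 m (u v : nat -> {poly C}) :
  solvec conj m u 1 = solvec conj m v 1 ->
  forall i, (1 <= i <= m)%N -> (u i).[1] = (v i).[1].
Proof.
move=> uv1 i i_range; have i_lt : (i.-1 < m)%N by lia.
have := congr1 (fun M : 'cV[C]_m => M (Ordinal i_lt) 0) uv1.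
rewrite /= !mxE !leval_ltilde1 prednK; last by lia.
case: ltnP => [_ //|i_ge]; have -> : i = m by lia.
exact: fmorph_inj.
Qed.

Lemma eq_solvec m (u v : nat -> {poly C}) z :
  (forall i, (1 <= i <= m)%N -> u i = v i) ->
  solvec conj m u z = solvec conj m v z.
Proof.
move=> uv; apply/matrixP => i j; have i_lt := ltn_ord i.
by rewrite !mxE uv ?(uv m) //; lia.
Qed.

Lemma solvec0 m z : solvec conj m (fun=> 0) z = 0.
Proof.
apply/matrixP => i j; rewrite !mxE horner0 /leval /= size_poly0 poly_def.
by rewrite big_ord0 !mul0r horner0 mul0r if_same.
Qed.

End ConjugateReversal.

Lemma sum_coef_mulcJ_eq0 (R : rcfType) (r : seq nat) N
    (w : nat -> {poly R[i]}) :
  (forall j, j \in r -> (size (w j) <= N.+1)%N) ->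
  \sum_(j <- r) \sum_(a < N.+1) (w j)`_a * ((w j)`_a)^*%C = 0 ->
  forall j, j \in r -> w j = 0.
Proof.
move=> w_small sum0 j rj.
have coef_ge0 k (a : 'I_N.+1) : true -> 0 <= (w k)`_a * ((w k)`_a)^*%C.
  by move=> _; exact: mulcJ_ge0.
have sum_ge0 k : true -> 0 <= \sum_(a < N.+1) (w k)`_a * ((w k)`_a)^*%C.
  by move=> _; apply: sumr_ge0 => a; exact: coef_ge0.
move/eqP: sum0; rewrite (psumr_eq0 _ sum_ge0) => /allP/(_ j rj).
rewrite (psumr_eq0 _ (coef_ge0 j)) => /allP wj0.
apply/polyP => k; rewrite coef0; have [k_lt|k_ge] := ltnP k N.+1.
  move: (wj0 (Ordinal k_lt) (mem_index_enum _)).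
  by rewrite /= mulf_eq0 conjc_eq0 orbb => /eqP.
by rewrite nth_default // (leq_trans (w_small j rj)).
Qed.

Lemma cleared_system_eq0 (R : rcfType) N m zeta (w : nat -> {poly R[i]}) :
  (0 < m)%N -> cleared_system conjc N m zeta w ->
  (forall i, (1 <= i <= m)%N -> (w i).[1] = 0) ->
  forall i, (1 <= i <= m)%N -> w i = 0.
Proof.
move=> m_gt0 w_sys w1 i i_range; have [w_small _ _] := w_sys.
have iotaP j : (j \in iota 1 m) = (1 <= j <= m)%N.
  by rewrite mem_iota add1n ltnS.
pose T := \sum_(j <- iota 1 m) w j * crev conjc N (w j).
have T_small : (size T <= N.*2.+1)%N.
  rewrite /T big_seq.
  apply: (big_ind (fun p : {poly R[i]} => size p <= N.*2.+1)%N) => [|p q|j].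
  - by rewrite size_poly0.
  - move=> p_small q_small.
    by rewrite (leq_trans (size_polyD _ _)) // geq_max p_small.
  - by rewrite iotaP => /w_small /size_mul_crev.
have T_sym n : (n <= N.*2)%N -> T`_(N.*2 - n) = (T`_n)^*%C.
  move=> n_le; rewrite !coef_sum rmorph_sum; apply: eq_big_seq => j.
  by rewrite iotaP => /w_small j_small; rewrite coef_mul_crev_sym //; exact: conjcK.
have TE : T = T`_N *: 'X^N.
  exact: self_reciprocal_dvdXnE (cleared_system_dvdXn m_gt0 w_sys) T_small T_sym.
have T1 : T.[1] = 0.
  rewrite horner_sum big_seq big1 // => j; rewrite iotaP => /w1.
  by rewrite hornerM => ->; rewrite mul0r.
have TN : T`_N = 0 by move: T1; rewrite [in LHS]TE hornerZ hornerXn expr1n mulr1.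
apply: (sum_coef_mulcJ_eq0 (r := iota 1 m) (N := N)); last by rewrite iotaP.
  by move=> j; rewrite iotaP; exact: w_small.
by rewrite -[RHS]TN coef_sum; apply: eq_bigr => j _; rewrite coef_mul_crev_mid.
Qed.

Theorem corollary1 (R : realType) (F : {pred R[i]})
    (hF : divring_closed F) (hconj : {in F, forall x, conjc x \in F})
    (m N : nat) (hm : (2 <= m)%N) (hN : (1 <= N)%N)
    (zeta : nat -> laurent R[i])
    (hzeta : forall i, (1 <= i < m)%N -> in_PNminus F N (zeta i)) :
  (forall u v : nat -> {poly R[i]},
     is_solution (@conjc R) F N m zeta u ->
     is_solution (@conjc R) F N m zeta v ->
     solvec (@conjc R) m u 1 = solvec (@conjc R) m v 1 ->
     forall z : R[i], z != 0 -> solvec (@conjc R) m u z = solvec (@conjc R) m v z)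
  /\
  (forall u : nat -> {poly R[i]},
     is_solution (@conjc R) F N m zeta u ->
     solvec (@conjc R) m u 1 = 0 ->
     forall z : R[i], z != 0 -> solvec (@conjc R) m u z = 0).
Proof.
have m_gt0 : (0 < m)%N by apply: leq_trans hm.
split=> [u v u_sol v_sol uv1 z _|u u_sol u1 z _].
  have := cleared_systemB (is_solution_cleared m_gt0 u_sol)
                          (is_solution_cleared m_gt0 v_sol).
  move=> /(cleared_system_eq0 m_gt0) uv_eq0.
  apply: eq_solvec => i i_range; apply/subr0_eq; apply: uv_eq0 i_range => j j_range.
  by rewrite hornerD hornerN (horner1_eq_of_solvec1 uv1 j_range) subrr.
rewrite -(solvec0 conjc m 1) in u1; rewrite -(solvec0 conjc m z).
apply: eq_solvec; apply: (cleared_system_eq0 m_gt0 (is_solution_cleared m_gt0 u_sol)).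
by move=> j j_range; rewrite (horner1_eq_of_solvec1 u1 j_range) horner0.
Qed.
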